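(* For every $n\ge0$, the map $\mathbf{Dyck}$ restricts to a bijection from the set of compacted binary trees of size $n$ onto the set of C-decorated Dyck paths of length $2n$ (i.e. C-decorated paths ending at $(n,n)$).
   Context: Binary trees are rooted plane trees in which each node is a leaf or an internal node with ordered left and right subtrees; size = number of internal nodes; postorder visits left subtree, right subtree, root. A relaxed binary tree $C$ of size $n$ is obtained from a binary tree $C_*$ with $n$ internal nodes (its spine) by keeping the left-most leaf and turning every other leaf $\ell$ into a pointer to a vertex (internal node or the left-most leaf) preceding $\ell$ in postorder; it is a DAG on the internal nodes and the left-most leaf, each internal node having a left/right out-edge to its child if that child is internal or the left-most leaf, and otherwise to the pointer's target. For a vertex $u$ let $B(u)$ be a single leaf if $u$ is the left-most leaf, and otherwise the binary tree with left/right subtrees $B(v),B(w)$ where $v,w$ are the left/right out-neighbours of $u$. $C$ is compacted if $B(u)\not\cong B(v)$ for all distinct vertices $u,v$. A horizontally decorated path is a lattice path from $(0,0)$ with steps $H=(1,0)$, $V=(0,1)$ in the region $0\le y\le x$, each $H$ step decorated by a number in $\{1,\dots,k+1\}$, $k$ its $y$-coordinate. The map $\mathbf{Dyck}$: label the internal nodes and the left-most leaf of $C_*$ in postorder by $1,\dots,n+1$. Define words recursively by $\mathbf{Path}(\text{leaf})=H$ and $\mathbf{Path}((T_1,T_2))=\mathbf{Path}(T_1)\mathbf{Path}(T_2)V$. The word $\mathbf{Path}(C_* )$ begins with the $H$ of the left-most leaf; removing it gives a path $P_0$ from $(0,0)$ to $(n,n)$ in $0\le y\le x$, whose $H$ steps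 correspond to the non-left-most leaves of $C_*$ (i.e. to pointers). Decorating each $H$ step of $P_0$ with the label of the vertex its pointer points to gives the horizontally decorated path $\mathbf{Dyck}(C)$. C-decorated paths: in a horizontally decorated path, give each $H$ step the label equal to its decoration and each $V$ step the label equal to its final $y$-coordinate plus one; write $\mathcal{L}(S)$ for the label of step $S$. To each $V$ step associate a pair $(v_1,v_2)$: $v_2=\mathcal{L}(S')$ where $S'$ is the step immediately before $V$; for $v_1$, draw the line of slope $1$ from the endpoint of $V$ in the south-west direction until it touches the path again, and let $S''$ be the last step before $V$ whose endpoint lies on this line; set $v_1=\mathcal{L}(S'')$, or $v_1=1$ if there is no such step. A C-decorated path is a horizontally decorated path such that for every occurrence of three consecutive steps $HHV$ whose two $H$ steps have decorations $h_1,h_2$, one has $(h_1,h_2)\ne(v_1,v_2)$ for every $V$ step preceding this occurrence. *)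

From mathcomp Require Import all_boot.
Set Implicit Arguments. Unset Strict Implicit. Unset Printing Implicit Defensive.

Inductive btree := BLeaf | BNode of btree & btree.

(* Relaxed binary trees.  A relaxed binary tree is encoded by its      *)
(* spine C_* in which the left-most leaf is marked [RL] and every other *)
(* leaf [l] is replaced by [RP k], meaning that the pointer [l] points  *)
(* to the vertex with postorder label [k] (vertices = internal nodes    *)
(* and the left-most leaf, labelled 1..n+1 in postorder).              *)
Inductive rtree := RL | RP of nat | RN of rtree & rtree.

Fixpoint spine (t : rtree) : btree :=
  match t with RN l r => BNode (spine l) (spine r) | _ => BLeaf end.

Fixpoint bsize (t : btree) : nat :=
  match t with BLeaf => 0 | BNode l r => bsize l + bsize r + 1 end.

Fixpoint no_RL (t : rtree) : bool :=
  match t with RL => false | RP _ => true | RN l r => no_RL l && no_RL r end.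

Fixpoint leftmost_ok (t : rtree) : bool :=
  match t with RL => true | RP _ => false | RN l r => leftmost_ok l && no_RL r end.

(* postorder tokens: left-most leaf, pointer leaf (with target), internal node *)
Inductive tok := TL | TP of nat | TN.

Fixpoint post (t : rtree) : seq tok :=
  match t with
  | RL => [:: TL]
  | RP k => [:: TP k]
  | RN l r => post l ++ post r ++ [:: TN]
  end.

(* vertices of the DAG: internal nodes and the left-most leaf *)
Definition is_vertex (x : tok) : bool :=
  match x with TP _ => false | _ => true end.

(* every pointer points to a vertex (label in 1..#vertices so far)     *)
(* preceding it in postorder                                          *)
Definition pointers_ok (t : rtree) : Prop :=
  forall i, i < size (post t) ->
    match nth TN (post t) i with
    | TP k => 1 <= k <= count is_vertex (take i (post t))
    | _ => True
    end.

Definition relaxed (n : nat) (t : rtree) : Prop :=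
  [/\ bsize (spine t) = n, leftmost_ok t & pointers_ok t].

(* B(u) for all vertices u.  [expand t env] traverses t in postorder;  *)
(* [env] lists B(v) for the vertices v already visited, in label order; *)
(* it returns the tree B(root of t) (for a pointer leaf: B of its       *)
(* target, i.e. of the corresponding out-neighbour) and the new env.    *)
Fixpoint expand (t : rtree) (env : seq btree) : btree * seq btree :=
  match t with
  | RL => (BLeaf, rcons env BLeaf)
  | RP k => (nth BLeaf env k.-1, env)
  | RN l r =>
      let (bl, env1) := expand l env in
      let (br, env2) := expand r env1 in
      (BNode bl br, rcons env2 (BNode bl br))
  end.

(* [B_list t]`_(k-1) = B(vertex with label k), k = 1..n+1 *)
Definition B_list (t : rtree) : seq btree := (expand t [::]).2.

Definition compacted (t : rtree) : Prop :=
  forall i j, i < j < size (B_list t) ->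
    nth BLeaf (B_list t) i <> nth BLeaf (B_list t) j.

Inductive step := H of nat | V.

Definition isH (s : step) : bool := if s is H _ then true else false.
Definition isV (s : step) : bool := if s is V then true else false.

(* coordinates of the endpoint of step i (0-based) *)
Definition xend (p : seq step) (i : nat) : nat := count isH (take i.+1 p).
Definition yend (p : seq step) (i : nat) : nat := count isV (take i.+1 p).

Definition hdec_path (p : seq step) : Prop :=
  forall i, i < size p ->
    yend p i <= xend p i /\
    match nth V p i with
    | H k => 1 <= k <= (count isV (take i p)).+1
    | V => True
    end.

Definition ends_at (p : seq step) (x y : nat) : Prop :=
  count isH p = x /\ count isV p = y.

Definition lab (p : seq step) (i : nat) : nat :=
  match nth V p i with H k => k | V => (yend p i).+1 end.

(* the endpoint of step i lies on the slope-1 line through the endpoint of step j *)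
Definition on_line (p : seq step) (i j : nat) : bool :=
  xend p i + yend p j == xend p j + yend p i.

Definition v1 (p : seq step) (j : nat) : nat :=
  let cands := [seq i <- iota 0 j | on_line p i j] in
  if cands is [::] then 1 else lab p (last 0 cands).

Definition v2 (p : seq step) (j : nat) : nat := lab p j.-1.

Definition C_decorated (p : seq step) : Prop :=
  hdec_path p /\
  forall i h1 h2, i.+2 < size p ->
    nth V p i = H h1 -> nth V p i.+1 = H h2 -> nth V p i.+2 = V ->
    forall j, j < i -> nth V p j = V -> (h1, h2) <> (v1 p j, v2 p j).

(* The map Dyck: Path(C_* ) with the left-most leaf's H removed, each H *)
(* (a pointer) decorated with the label of its target.                 *)
Definition tok_step (x : tok) : step :=
  match x with TP k => H k | TN => V | TL => H 1 (* never used after behead *) end.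

Definition Dyck (t : rtree) : seq step := map tok_step (behead (post t)).

From mathcomp Require Import all_boot zify.
Set Implicit Arguments. Unset Strict Implicit. Unset Printing Implicit Defensive.

(* Reading the postorder word of the spine after its first letter gives the
   path: a non-left-most leaf is an H step, an internal node a V step. Computing
   B along this word with a stack, the two top entries before a V step are B of
   the children of the vertex it creates, and the second one was pushed by the
   last earlier step ending on the same slope-1 line; so these children have
   labels (v1, v2). Once the vertices created earlier are known to have distinct
   B, a new vertex repeats one of them iff two V steps have the same children.
   For the later of two such V steps, a V or a VH just before it would make one
   child the freshest vertex, which the earlier V step cannot reach; so it ends
   a pattern HHV whose decorations repeat the (v1, v2) of an earlier V step,
   which is exactly what C-decoration forbids. Bijectivity comes from parsing a
   tree back from its postorder word. *)

Lemma count_take_nth T x0 (P : pred T) s m : m < size s ->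
  count P (take m.+1 s) = count P (take m s) + P (nth x0 s m).
Proof. by move=> ms; rewrite (take_nth x0 ms) -cats1 count_cat /= addn0. Qed.

Lemma count_take_le T (P : pred T) s m : count P (take m s) <= count P s.
Proof. by rewrite -{2}(cat_take_drop m s) count_cat leq_addr. Qed.

Lemma count_take_mono T (P : pred T) s a b : a <= b ->
  count P (take a s) <= count P (take b s).
Proof. by move=> ab; rewrite -(take_takel s ab) count_take_le. Qed.

Definition isTL (x : tok) : bool := if x is TL then true else false.
Definition isTN (x : tok) : bool := if x is TN then true else false.
Definition isLeaf (x : tok) : bool := ~~ isTN x.

Definition step_tok (s : step) : tok := if s is H k then TP k else TN.

Lemma step_tokK : cancel step_tok tok_step.
Proof. by case. Qed.

Lemma count_TN_step q : count isTN (map step_tok q) = count isV q.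
Proof. by rewrite count_map; apply: eq_count; case. Qed.

Lemma count_vertex_step q : count is_vertex (map step_tok q) = count isV q.
Proof. by rewrite count_map; apply: eq_count; case. Qed.

Lemma count_leaf_step q : count isLeaf (map step_tok q) = count isH q.
Proof. by rewrite count_map; apply: eq_count; case. Qed.

Lemma noTL_step_tok s : ~~ has isTL s -> s = map step_tok (map tok_step s).
Proof. by elim: s => [|[|k|] s IH] //= /IH <-. Qed.

Lemma has_TL_step q : has isTL (map step_tok q) = false.
Proof. by elim: q => [|[]]. Qed.

Lemma size_post_gt0 t : 0 < size (post t).
Proof. by case: t => //= l r; rewrite !size_cat /= !addn1 addnS. Qed.

Lemma no_RLE t : no_RL t = ~~ has isTL (post t).
Proof. by elim: t => //= l -> r ->; rewrite !has_cat orbF negb_or. Qed.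

Lemma leftmost_okE t :
  leftmost_ok t = isTL (head TN (post t)) && ~~ has isTL (behead (post t)).
Proof.
elim: t => //= l -> r _; rewrite no_RLE.
case: (post l) (size_post_gt0 l) => //= x s _.
by rewrite !has_cat orbF !negb_or andbA.
Qed.

Lemma leftmost_okP t : leftmost_ok t <-> exists p, post t = TL :: map step_tok p.
Proof.
rewrite leftmost_okE; case: (post t) => [|x s] /=; first by split=> // -[].
split=> [/andP [] | [q [-> ->]]]; last by rewrite has_TL_step.
by case: x => // _ /noTL_step_tok ->; exists (map tok_step s).
Qed.

Lemma Dyck_post t p : post t = TL :: map step_tok p -> Dyck t = p.
Proof. by rewrite /Dyck => -> /=; apply: (mapK step_tokK). Qed.

Lemma post_Dyck t : leftmost_ok t -> post t = TL :: map step_tok (Dyck t).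
Proof. by case/leftmost_okP=> p Ep; rewrite (Dyck_post Ep). Qed.

Lemma count_TN_post t : count isTN (post t) = bsize (spine t).
Proof. by elim: t => //= l IHl r IHr; rewrite !count_cat IHl IHr /=; lia. Qed.

Lemma count_leaf_post t : count isLeaf (post t) = (count isTN (post t)).+1.
Proof. by elim: t => //= l IHl r IHr; rewrite !count_cat IHl IHr /=; lia. Qed.

Lemma count_take_post t m : 0 < m ->
  count isTN (take m (post t)) < count isLeaf (take m (post t)).
Proof.
elim: t m => [|k|l IHl r IHr] [|m] //= _.
rewrite take_cat; have [_|ml] := ltnP m.+1 (size (post l)); first exact: IHl.
rewrite take_cat !count_cat count_leaf_post.
have [_|rm] := ltnP (m.+1 - size (post l)) (size (post r)).
  case: (m.+1 - size (post l)) => [|m']; rewrite ?take0 //=; have := IHr m'.+1; lia.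
rewrite !count_cat count_leaf_post.
by case: (_ - _ - _) => [|[|m']] /=; lia.
Qed.

Definition parse_tok (st : seq rtree) (x : tok) : seq rtree :=
  match x with
  | TL => RL :: st
  | TP k => RP k :: st
  | TN => if st is r :: l :: st' then RN l r :: st' else st
  end.

Lemma parse_post t st s :
  foldl parse_tok st (post t ++ s) = foldl parse_tok (t :: st) s.
Proof. by elim: t st s => //= l IHl r IHr st s; rewrite -!catA IHl IHr. Qed.

Lemma post_inj : injective post.
Proof. by move=> t1 t2 E; have := parse_post t1 [::] [::]; rewrite E parse_post => -[]. Qed.

Definition eval_tok (c : seq btree * seq btree) (x : tok) : seq btree * seq btree :=
  let: (stk, env) := c in
  match x with
  | TL => (BLeaf :: stk, rcons env BLeaf)
  | TP k => (nth BLeaf env k.-1 :: stk, env)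
  | TN => if stk is r :: l :: stk' then (BNode l r :: stk', rcons env (BNode l r)) else c
  end.

Lemma eval_post t stk env s :
  foldl eval_tok (stk, env) (post t ++ s) =
  foldl eval_tok ((expand t env).1 :: stk, (expand t env).2) s.
Proof.
elim: t stk env s => //= l IHl r IHr stk env s.
rewrite -!catA IHl; case: (expand l env) => bl env1 /=.
by rewrite IHr; case: (expand r env1).
Qed.

Lemma eval_tok_env c x : exists w, (eval_tok c x).2 = c.2 ++ w.
Proof.
case: c x => [[|r [|l st]] env] [|k|] /=;
  by [exists [:: BLeaf]; rewrite cats1 | exists [::]; rewrite cats0
     | exists [:: BNode l r]; rewrite cats1].
Qed.

Lemma foldl_eval_env c s : exists w, (foldl eval_tok c s).2 = c.2 ++ w.
Proof.
elim: s c => [|x s IH] c /=; first by exists [::]; rewrite cats0.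
have [w1 ->] := IH (eval_tok c x); have [w2 ->] := eval_tok_env c x.
by exists (w2 ++ w1); rewrite catA.
Qed.

Lemma eval_tok_TN c : 1 < size c.1 ->
  exists r l st, c.1 = [:: r, l & st] /\
                 eval_tok c TN = (BNode l r :: st, rcons c.2 (BNode l r)).
Proof. by case: c => [[|r [|l st]] env] //= _; exists r, l, st. Qed.

Definition run (p : seq step) : seq btree * seq btree :=
  foldl eval_tok ([:: BLeaf], [:: BLeaf]) (map step_tok p).

Definition parse (p : seq step) : seq rtree :=
  foldl parse_tok [:: RL] (map step_tok p).

Lemma B_list_run t p : post t = TL :: map step_tok p -> B_list t = (run p).2.
Proof. by move=> Ep; have := eval_post t [::] [::] [::]; rewrite cats0 Ep /run /= => ->. Qed.

Lemma run_takeS p m : m < size p ->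
  run (take m.+1 p) = eval_tok (run (take m p)) (step_tok (nth V p m)).
Proof. by move=> mp; rewrite /run (take_nth V mp) map_rcons foldl_rcons. Qed.

Lemma parse_takeS p m : m < size p ->
  parse (take m.+1 p) = parse_tok (parse (take m p)) (step_tok (nth V p m)).
Proof. by move=> mp; rewrite /parse (take_nth V mp) map_rcons foldl_rcons. Qed.

Lemma run_take_env p m : exists w, (run p).2 = (run (take m p)).2 ++ w.
Proof.
by rewrite {1}/run -{1}(cat_take_drop m p) map_cat foldl_cat; apply: foldl_eval_env.
Qed.

Definition ballot (p : seq step) : Prop :=
  forall m, count isV (take m p) <= count isH (take m p).

Definition decorated (p : seq step) : Prop :=
  forall i k, i < size p -> nth V p i = H k -> 0 < k <= (count isV (take i p)).+1.

Lemma hdec_pathP p : hdec_path p <-> ballot p /\ decorated p.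
Proof.
split=> [hp | [hb hd] i ip]; last first.
  split; first exact: hb.
  by case pi: (nth V p i) => [k|] //; apply: hd.
split=> [m | i k ip pi]; last by have [_] := hp i ip; rewrite pi.
wlog mp : m / m <= size p.
  move=> W; case: (leqP m (size p)) => [/W //|/ltnW/take_oversize ->].
  by rewrite -{1 2}(take_size p); apply: W.
by case: m mp => [|i] ip; [rewrite take0 | have [] := hp i ip].
Qed.

Lemma ballot_post t p : post t = TL :: map step_tok p -> ballot p.
Proof.
move=> Ep m; have := count_take_post t (ltn0Sn m).
by rewrite Ep /= -map_take count_TN_step count_leaf_step; lia.
Qed.

Lemma pointers_okE t p : post t = TL :: map step_tok p -> pointers_ok t <-> decorated p.
Proof.
rewrite /pointers_ok => ->; split=> [Hptr i k ip pi | Hd [|i] //=].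
  have := Hptr i.+1; rewrite /= size_map (nth_map V) // pi -map_take count_vertex_step.
  by apply.
rewrite size_map ltnS => ip; rewrite (nth_map V) // -map_take count_vertex_step.
by case pi: (nth V p i) => [k|] //; apply: Hd.
Qed.

Lemma ends_at_post t p : post t = TL :: map step_tok p ->
  ends_at p (bsize (spine t)) (bsize (spine t)).
Proof.
move=> Ep; rewrite -count_TN_post; have := count_leaf_post t.
by rewrite /ends_at Ep /= count_TN_step count_leaf_step; lia.
Qed.

Definition level (p : seq step) (m : nat) : nat :=
  (count isH (take m p)).+1 - count isV (take m p).

Section Ballot.

Variable p : seq step.
Hypothesis p_ballot : ballot p.

Lemma level_H m k : m < size p -> nth V p m = H k -> level p m.+1 = (level p m).+1.
Proof.
by move=> mp pm; have := p_ballot m; rewrite /level !(count_take_nth V) // pm /=; lia.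
Qed.

Lemma level_V m : m < size p -> nth V p m = V ->
  level p m = (level p m.+1).+1 /\ 0 < level p m.+1.
Proof.
by move=> mp pm; have := p_ballot m.+1; rewrite /level !(count_take_nth V) // pm /=; lia.
Qed.

Lemma parse_take m : m <= size p ->
  flatten (map post (rev (parse (take m p)))) = TL :: map step_tok (take m p) /\
  size (parse (take m p)) = level p m.
Proof.
elim: m => [|m IH] mp; first by rewrite /level take0.
have [IH1 IH2] := IH (ltnW mp).
rewrite parse_takeS // (take_nth V mp) map_rcons.
case pm: (nth V p m) => [k|] /=.
  rewrite (level_H mp pm) -IH2 rev_cons map_rcons -cats1 flatten_cat IH1.
  by rewrite -rcons_cons cats1.
have [lv lv0] := level_V mp pm.
case: (parse (take m p)) IH1 IH2 => [|r [|l st]] /= IH1 IH2; try lia.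
split; last lia.
by rewrite -rcons_cons -IH1 !rev_cons !map_rcons -!cats1 !flatten_cat /= !cats0 -!catA.
Qed.

Lemma exists_post : count isH p = count isV p -> exists t, post t = TL :: map step_tok p.
Proof.
move=> Hc; have [] := parse_take (leqnn (size p)); rewrite /level take_size Hc subSnn.
by case: (parse p) => [|t [|]] //= <- _; exists t; rewrite cats0.
Qed.

Lemma run_size m : m <= size p ->
  size (run (take m p)).1 = level p m /\ size (run (take m p)).2 = (count isV (take m p)).+1.
Proof.
elim: m => [|m IH] mp; first by rewrite /level take0.
have [IH1 IH2] := IH (ltnW mp); rewrite run_takeS // (count_take_nth V) //.
case pm: (nth V p m) => [k|] /=.
  by case: (run (take m p)) IH1 IH2 => stk env /= -> ->; rewrite (level_H mp pm) addn0.
have [lv lv0] := level_V mp pm.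
have [|r [l [st [E ->]]]] := @eval_tok_TN (run (take m p)); first by rewrite IH1 lv.
by move: IH1 IH2; rewrite E /= size_rcons => ? ->; split; lia.
Qed.

Lemma run_V m : m < size p -> nth V p m = V ->
  exists r l st, (run (take m p)).1 = [:: r, l & st] /\
    run (take m.+1 p) = (BNode l r :: st, rcons (run (take m p)).2 (BNode l r)).
Proof.
move=> mp pm; rewrite run_takeS // pm /=; apply: eval_tok_TN.
by have [lv lv0] := level_V mp pm; rewrite (run_size (ltnW mp)).1 lv.
Qed.

Lemma nth_run_take m i : m <= size p -> i <= count isV (take m p) ->
  nth BLeaf (run (take m p)).2 i = nth BLeaf (run p).2 i.
Proof.
move=> mp im; have [w ->] := run_take_env p m.
by rewrite nth_cat (run_size mp).2 ltnS im.
Qed.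

End Ballot.

Lemma yend_V p j : j < size p -> nth V p j = V -> yend p j = (count isV (take j p)).+1.
Proof. by move=> jp pj; rewrite /yend (count_take_nth V) // pj addn1. Qed.

Lemma yend_lt p i j : i < j -> j < size p -> nth V p j = V -> yend p i < yend p j.
Proof. by move=> ij jp pj; rewrite (yend_V jp pj) ltnS count_take_mono. Qed.

Lemma exists_V_yend p a : 0 < a <= count isV p ->
  exists j, [/\ j < size p, nth V p j = V & yend p j = a].
Proof.
elim: p a => [|x p IH] a /andP [a0 ap]; first by case: a a0 ap.
have yendS j : yend (x :: p) j.+1 = isV x + yend p j by [].
case: x ap yendS => [k|] /= ap yendS.
  have [|j [jp pj yj]] := IH a; first lia.
  by exists j.+1; rewrite yendS yj.
case: a a0 ap => [|[|a]] // _ ap; first by exists 0; rewrite /yend /= take0.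
have [|j [jp pj yj]] := IH a.+1; first lia.
by exists j.+1; rewrite yendS yj.
Qed.

Lemma v1_peak p i k : i.+2 < size p -> nth V p i.+1 = H k -> nth V p i.+2 = V ->
  v1 p i.+2 = lab p i.
Proof.
move=> ip pi1 pi2.
have x1 : xend p i.+1 = (xend p i).+1.
  by rewrite /xend (count_take_nth V isH (ltnW ip)) pi1 addn1.
have y1 : yend p i.+1 = yend p i.
  by rewrite /yend (count_take_nth V isV (ltnW ip)) pi1 addn0.
have x2 : xend p i.+2 = xend p i.+1 by rewrite /xend (count_take_nth V isH ip) pi2 addn0.
have y2 : yend p i.+2 = (yend p i.+1).+1 by rewrite /yend (count_take_nth V isV ip) pi2 addn1.
have on_i : on_line p i i.+2 by rewrite /on_line x2 y2 x1 y1; apply/eqP; lia.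
have off_i1 : on_line p i.+1 i.+2 = false by rewrite /on_line x2 y2 x1 y1; apply/eqP; lia.
rewrite /v1 (_ : iota 0 i.+2 = iota 0 i ++ [:: i; i.+1]); last by rewrite -addn2 iotaD.
rewrite filter_cat /= on_i off_i1 cats1.
by case: [seq _ <- _ | _] => [|c cs] //=; rewrite last_rcons.
Qed.

Definition label_at (p : seq step) (m l : nat) : nat :=
  let cands := [seq i <- iota 0 m | level p i.+1 == l] in
  if cands is [::] then 1 else lab p (last 0 cands).

Lemma label_atS p m l :
  label_at p m.+1 l = if level p m.+1 == l then lab p m else label_at p m l.
Proof.
rewrite /label_at (_ : iota 0 m.+1 = rcons (iota 0 m) m); last by rewrite -cats1 -addn1 iotaD.
rewrite filter_rcons; case: ifP => // _.
by case: [seq _ <- _ | _] => [|c cs] //=; rewrite last_rcons.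
Qed.

Lemma v1_label_at p j : ballot p -> v1 p j = label_at p j (level p j.+1).
Proof.
move=> hb; rewrite /v1 /label_at (@eq_filter _ _ (fun i => level p i.+1 == level p j.+1)) //.
move=> i; have := hb i.+1; have := hb j.+1.
by rewrite /on_line /level /xend /yend => hj hi; apply/eqP/eqP; lia.
Qed.

Section Machine.

Variable p : seq step.
Hypotheses (p_ballot : ballot p) (p_dec : decorated p).

Lemma run_B0 : nth BLeaf (run p).2 0 = BLeaf.
Proof. by rewrite -(nth_run_take p_ballot (m := 0)) ?take0. Qed.

Lemma size_run : size (run p).2 = (count isV p).+1.
Proof. by rewrite -{1}(take_size p) (run_size p_ballot (leqnn _)).2 take_size. Qed.

Lemma V_step_gt0 j : j < size p -> nth V p j = V -> 0 < j.
Proof.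
case: j => // jp pj; have := p_ballot 1.
by rewrite (count_take_nth V) // (count_take_nth V) // take0 pj.
Qed.

Lemma run_top m : m < size p ->
  nth BLeaf (run (take m.+1 p)).1 0 = nth BLeaf (run p).2 (lab p m).-1.
Proof.
move=> mp; rewrite /lab; case pm: (nth V p m) => [k|].
  have /andP [_ km] := p_dec mp pm.
  rewrite run_takeS // pm -(nth_run_take p_ballot (ltnW mp)); last lia.
  by case: (run (take m p)).
have [r [l [st [_ E]]]] := run_V p_ballot mp pm.
rewrite -(nth_run_take p_ballot mp) // E /yend /= nth_rcons.
by rewrite (run_size p_ballot (ltnW mp)).2 (count_take_nth V) // pm addn1 ltnn eqxx.
Qed.

(* The entry at height [l] of the stack was pushed by the last step ending at
   level [l]; if there is none, it is the left-most leaf, of label 1. *)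
Lemma run_stack_nth m l : m <= size p -> 0 < l <= level p m ->
  nth BLeaf (run (take m p)).1 (level p m - l) = nth BLeaf (run p).2 (label_at p m l).-1.
Proof.
elim: m l => [|m IH] l mp /andP [l0 lm].
  move: lm; rewrite /level take0 /= => lm; have -> : l = 1 by lia.
  by rewrite run_B0.
rewrite label_atS; case: eqP => [<-|lnm]; first by rewrite subnn run_top.
case pm: (nth V p m) => [k|].
  have lS := level_H p_ballot mp pm; rewrite lS in lm lnm *.
  rewrite run_takeS // pm -IH; [|exact: ltnW | by apply/andP; split=> //; lia].
  by case: (run (take m p)) => stk env; rewrite subSn /=; [| lia].
have [lv _] := level_V p_ballot mp pm.
have [r [l' [st [E ->]]]] := run_V p_ballot mp pm.
rewrite -IH; [|exact: ltnW | by apply/andP; split=> //; lia].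
rewrite E lv subSn /=; last lia.
have : 0 < level p m.+1 - l by lia.
by case: (level p m.+1 - l).
Qed.

Lemma run_left_child j : j < size p -> nth V p j = V ->
  nth BLeaf (run (take j p)).1 1 = nth BLeaf (run p).2 (v1 p j).-1.
Proof.
move=> jp pj; have [lv lv0] := level_V p_ballot jp pj.
rewrite (v1_label_at j p_ballot) -run_stack_nth ?lv ?subSnn //; first exact: ltnW.
by rewrite lv0 leqnSn.
Qed.

Lemma run_right_child j : j < size p -> nth V p j = V ->
  nth BLeaf (run (take j p)).1 0 = nth BLeaf (run p).2 (v2 p j).-1.
Proof.
move=> jp pj; have := V_step_gt0 jp pj.
by case: j jp pj => // j jp _ _; apply: run_top; apply: ltnW.
Qed.

Lemma run_node j : j < size p -> nth V p j = V ->
  nth BLeaf (run p).2 (yend p j) =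
  BNode (nth BLeaf (run p).2 (v1 p j).-1) (nth BLeaf (run p).2 (v2 p j).-1).
Proof.
move=> jp pj; have [r [l [st [E E']]]] := run_V p_ballot jp pj.
have := run_top jp; rewrite E' /lab pj /= => <-.
by rewrite -run_left_child // -run_right_child // E.
Qed.

Lemma lab_bounds i : i < size p -> 0 < lab p i <= (yend p i).+1.
Proof.
move=> ip; rewrite /lab; case pi: (nth V p i) => [k|]; last by rewrite leqnn.
by rewrite /yend (count_take_nth V) // pi addn0; apply: p_dec pi.
Qed.

Lemma children_bounds j : j < size p -> nth V p j = V ->
  0 < v1 p j <= yend p j /\ 0 < v2 p j <= yend p j.
Proof.
move=> jp pj; split.
  rewrite /v1; case E: [seq _ <- _ | _] => [|c cs] /=; first by rewrite yend_V.
  have : last c cs \in [seq i <- iota 0 j | on_line p i j] by rewrite E mem_last.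
  rewrite mem_filter mem_iota add0n => /andP [_ ij].
  have := lab_bounds (ltn_trans ij jp).
  by have := yend_lt ij jp pj; lia.
have := V_step_gt0 jp pj; case: j jp pj => // j jp pj _.
by rewrite /v2 /= (yend_V jp pj); apply: lab_bounds; apply: ltnW.
Qed.

End Machine.

Definition all_distinct (s : seq btree) : Prop :=
  forall i j, i < j < size s -> nth BLeaf s i <> nth BLeaf s j.

Lemma C_decorated_distinct p : hdec_path p -> all_distinct (run p).2 -> C_decorated p.
Proof.
move=> hp hB; split=> // i h1 h2 ip pi pi1 pi2 j ji pj [e1 e2].
have [hb hd] := (hdec_pathP p).1 hp.
have jp : j < size p by lia.
apply: (hB (yend p j) (yend p i.+2)).
  by rewrite (yend_lt _ ip pi2) /= ?(size_run hb) ?ltnS ?count_take_le //; lia.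
rewrite !run_node // -e1 -e2 (v1_peak ip pi1 pi2) /v2 /=.
by rewrite /lab pi pi1.
Qed.

(* If the step before [m] is V, or the two steps before [m] are V and H, then
   one child of [m] is the vertex created just before, fresher than both
   children of [j]; otherwise [m] ends a pattern HHV. *)
Lemma C_decorated_children_neq p j m : C_decorated p -> j < m -> m < size p ->
  nth V p j = V -> nth V p m = V -> (v1 p j, v2 p j) <> (v1 p m, v2 p m).
Proof.
case=> /hdec_pathP [hb hd] hC jm mp pj pm [e1 e2].
have [/andP [_ b1] /andP [_ b2]] := children_bounds hb hd (ltn_trans jm mp) pj.
have yjm := yend_lt jm mp pm.
case: m jm mp pm e1 e2 yjm => // m jm mp pm e1 e2 yjm.
have ym : yend p m.+1 = (yend p m).+1 := yend_V mp pm.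
case pm1: (nth V p m) => [k1|]; last first.
  have : v2 p m.+1 = (yend p m).+1 by rewrite /v2 /lab /= pm1.
  lia.
have jm' : j < m.
  by rewrite ltn_neqAle -ltnS jm andbT; apply/eqP => ej; rewrite ej pm1 in pj.
case: m jm' jm mp pm e1 e2 yjm ym pm1 => // i ji _ ip pi2 e1 e2 yjm ym pi1.
case pi: (nth V p i) => [k2|].
  have ji' : j < i.
    by rewrite ltn_neqAle -ltnS ji andbT; apply/eqP => ej; rewrite ej pi in pj.
  apply: (hC i k2 k1 ip pi pi1 pi2 j ji' pj).
  by rewrite e1 e2 (v1_peak ip pi1 pi2) /v2 /lab /= pi pi1.
have yi : yend p i.+1 = yend p i.
  by rewrite /yend (count_take_nth V) ?pi1 ?addn0 //; apply: ltnW.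
have : v1 p i.+2 = (yend p i).+1 by rewrite (v1_peak ip pi1 pi2) /lab pi.
lia.
Qed.

Lemma distinct_C_decorated p : C_decorated p -> all_distinct (run p).2.
Proof.
move=> pC; have [hb hd] := (hdec_pathP p).1 pC.1.
suff distinct_below b : b <= count isV p ->
    forall a, a < b -> nth BLeaf (run p).2 a <> nth BLeaf (run p).2 b.
  by move=> a b /andP [ab]; rewrite (size_run hb) ltnS => bp; apply: distinct_below.
elim/ltn_ind: b => b IH bp a ab.
have [|m [mp pm ym]] := @exists_V_yend p b; first lia.
rewrite -ym run_node //; case: a ab => [|a] ab; first by rewrite run_B0.
have [|j [jp pj yj]] := @exists_V_yend p a.+1; first lia.
rewrite -yj run_node // => -[E1 E2].
have jm : j < m.
  rewrite ltnNge; apply/negP => mj.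
  have : yend p m <= yend p j := count_take_mono _ _ (mj : m.+1 <= j.+1).
  lia.
have label_inj x y : 0 < x <= yend p m -> 0 < y <= yend p m ->
    nth BLeaf (run p).2 x.-1 = nth BLeaf (run p).2 y.-1 -> x = y.
  move=> xm ym' E; case: (ltngtP x y) => // xy; exfalso.
    by apply: (IH y.-1 _ _ x.-1 _ E); lia.
  by apply: (IH x.-1 _ _ y.-1 _ (esym E)); lia.
have [vj1 vj2] := children_bounds hb hd jp pj.
have [vm1 vm2] := children_bounds hb hd mp pm.
have yjm := yend_lt jm mp pm.
by apply: (C_decorated_children_neq pC jm mp pj pm); congr pair; apply: label_inj => //; lia.
Qed.

Theorem proposition2p10 (n : nat) :
  (* Dyck maps compacted trees of size n to C-decorated Dyck paths of length 2n *)
  (forall t, relaxed n t -> compacted t ->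
     C_decorated (Dyck t) /\ ends_at (Dyck t) n n) /\
  (* injective on compacted trees of size n *)
  (forall t1 t2, relaxed n t1 -> compacted t1 ->
     relaxed n t2 -> compacted t2 -> Dyck t1 = Dyck t2 -> t1 = t2) /\
  (* surjective onto C-decorated Dyck paths of length 2n *)
  (forall p, C_decorated p -> ends_at p n n ->
     exists t, [/\ relaxed n t, compacted t & Dyck t = p]).
Proof.
split; [|split].
- move=> t [<- /post_Dyck Ep Hptr] Hc; split; last exact: ends_at_post.
  apply: C_decorated_distinct; last by rewrite -(B_list_run Ep).
  by apply/hdec_pathP; split; [apply: ballot_post Ep | apply/(pointers_okE Ep)].
- move=> t1 t2 [_ /post_Dyck E1 _] _ [_ /post_Dyck E2 _] _ E.
  by apply: post_inj; rewrite E1 E2 E.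
- move=> p pC [EH EV]; have [hb hd] := (hdec_pathP p).1 pC.1.
  have [t Ep] := exists_post hb (etrans EH (esym EV)).
  have [_ Esize] := ends_at_post Ep.
  exists t; split; last exact: Dyck_post Ep.
  + split; [by rewrite -Esize | by apply/leftmost_okP; exists p | exact/(pointers_okE Ep)].
  + by rewrite /compacted (B_list_run Ep); apply: distinct_C_decorated.
Qed.
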